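(* Fix $k\ge2$ and let $\delta:[n]\times[k]\to[n]$ be a uniformly random $k$-map. The probability that $\delta$ has a sink state or a sink pair is $O(n^{-k+1})$ as $n\to\infty$ (with implied constant at most $1+\frac{(k+1)^{2k}}{2(k-1)!}$).
   Context: $\delta_\alpha(i):=\delta(i,\alpha)$. A state $i$ is a sink state if $\delta_\alpha(i)=i$ for all $\alpha\in[k]$. Two distinct states $\{i,j\}$ form a sink pair if the set $N_{ij}=\{i,j,\delta_1(i),\delta_1(j),\dots,\delta_k(i),\delta_k(j)\}$ has cardinality at most $k+1$. *)

From HB Require Import structures.
From mathcomp Require Import all_boot all_order all_algebra.
Set Implicit Arguments. Unset Strict Implicit. Unset Printing Implicit Defensive.
Import Order.TTheory GRing.Theory Num.Theory.

(* A k-map on n states: delta : [n] x [k] -> [n]; states [n] = 'I_n,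
   letters [k] = 'I_k (0-based indexing). *)
Definition kmap (n k : nat) := {ffun 'I_n * 'I_k -> 'I_n}.

Definition sink_state n k (d : kmap n k) (i : 'I_n) : bool :=
  [forall a : 'I_k, d (i, a) == i].

Definition Nset n k (d : kmap n k) (i j : 'I_n) : {set 'I_n} :=
  [set i; j] :|: [set d (i, a) | a : 'I_k] :|: [set d (j, a) | a : 'I_k].

Definition sink_pair n k (d : kmap n k) (i j : 'I_n) : bool :=
  (i != j) && (#|Nset d i j| <= k.+1)%N.

Definition has_sink n k (d : kmap n k) : bool :=
  [exists i, sink_state d i] || [exists i, exists j, sink_pair d i j].

Definition bad_count n k : nat := #|[set d : kmap n k | has_sink d]|.

From HB Require Import structures.
From mathcomp Require Import all_boot all_order all_algebra.
From mathcomp Require Import zify ring.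
Set Implicit Arguments. Unset Strict Implicit. Unset Printing Implicit Defensive.
Import Order.TTheory GRing.Theory Num.Theory.

(* Union bound.  Let M = n ^ (n * k) be the number of k-maps on n states.
   - A map with a sink state i sends the k arguments (i, a) to i.
   - A map with a sink pair {i, j} sends the 2k arguments (i, a), (j, a) into
     N_ij; since {i, j} is contained in N_ij and |N_ij| <= k + 1, the set N_ij
     lies inside P :|: S for P = {i, j} and some (k-1)-element set S.
   Counting maps whose values on prescribed rows lie in a prescribed set
   (card_ffun_into, card_maps_into) gives n^(nk-k) maps per sink state and at
   most (k+1)^(2k) n^(nk-2k) maps per choice of (P, S).  Summing over the n
   states, the C(n,2) pairs P and the C(n,k-1) sets S, and using
   C(n,m) m! <= n^m, we obtain for 0 < k <= n the integer inequality
     bad_count n k * n^(k-1) * 2(k-1)! <= (2(k-1)! + (k+1)^(2k)) * M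
   (bad_count_scaled), which is the theorem after dividing by M n^(k-1) 2(k-1)!. *)

(* Functions aT -> rT whose values on D lie in S: the values on D are chosen
   in S, the values off D are arbitrary. *)
Lemma card_ffun_into (aT rT : finType) (D : {set aT}) (S : {set rT}) :
  #|[set f : {ffun aT -> rT} | [forall x in D, f x \in S]]|
    = #|S| ^ #|D| * #|rT| ^ #|~: D|.
Proof.
pose F x := if x \in D then mem S else mem [set: rT].
have -> : #|[set f : {ffun aT -> rT} | [forall x in D, f x \in S]]|
          = #|(family F : simpl_pred {ffun aT -> rT})|.
  apply: eq_card => f; rewrite inE; apply/forall_inP/familyP => fS x.
    by rewrite /F; case: ifP => [/fS | _]; rewrite ?inE.
  by move=> Dx; have := fS x; rewrite /F Dx.
rewrite card_family foldrE big_map big_enum /= (bigID (mem D)) /=.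
rewrite (eq_bigr (fun=> #|S|)) => [|x Dx]; last by rewrite /F Dx.
rewrite [X in _ * X](eq_bigr (fun=> #|rT|)) => [|x /negbTE nDx]; last first.
  by rewrite /F nDx cardsT.
rewrite !prod_nat_const; congr (_ ^ _ * _ ^ _); apply: eq_card => x.
by rewrite !inE.
Qed.

Lemma card_bigcup_le (I T : finType) (P : pred I) (A : I -> {set T}) :
  #|\bigcup_(i | P i) A i| <= \sum_(i | P i) #|A i|.
Proof.
apply: (big_ind2 (fun (U : {set T}) s => #|U| <= s)) => //; first by rewrite cards0.
by move=> U1 s1 U2 s2 le1 le2; exact: leq_trans (leq_card_setU U1 U2) (leq_add le1 le2).
Qed.

Lemma exists_superset_card (T : finType) (U : {set T}) m :
  #|U| <= m <= #|T| -> exists2 S : {set T}, U \subset S & #|S| = m.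
Proof.
elim: m => [|m IHm] /andP[Um mT].
  by exists U => //; apply/eqP; rewrite -leqn0.
have [Um' | ltmU] := leqP #|U| m; last first.
  by exists U => //; apply/eqP; rewrite eqn_leq Um ltmU.
have [S US cardS] := IHm (introT andP (conj Um' (ltnW mT))).
have /card_gt0P[x] : 0 < #|~: S| by move: mT; rewrite -(cardsC S) cardS; lia.
rewrite inE => Sx.
by exists (x |: S); [exact: subset_trans US (subsetUr _ _) | rewrite cardsU1 Sx cardS].
Qed.

(* C(n, m) m! is the falling factorial n (n-1) ... (n-m+1), at most n^m. *)
Lemma bin_fact_le n m : 'C(n, m) * m`! <= n ^ m.
Proof.
rewrite bin_ffact ffact_prod -[m in n ^ m]card_ord -prod_nat_const.
by apply: leq_prod => i _; exact: leq_subr.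
Qed.

Lemma sum_draws_const (T : finType) m c :
  \sum_(A : {set T} | #|A| == m) c = 'C(#|T|, m) * c.
Proof.
by rewrite sum_nat_const -card_draws; congr (_ * _); apply: eq_card => A; rewrite inE.
Qed.

Section Counting.
Variables n k : nat.
Hypothesis k_gt0 : 0 < k.

Definition maps_into (I S : {set 'I_n}) : {set kmap n k} :=
  [set d : kmap n k | [forall x in setX I [set: 'I_k], d x \in S]].

(* The count of card_ffun_into, normalized by n^(|I| k) to avoid subtraction
   in the exponent. *)
Lemma card_maps_into (I S : {set 'I_n}) :
  #|maps_into I S| * n ^ (#|I| * k) = #|S| ^ (#|I| * k) * n ^ (n * k).
Proof.
have cardD : #|setX I [set: 'I_k]| = #|I| * k by rewrite cardsX cardsT card_ord.
have cardDC : #|~: setX I [set: 'I_k]| + #|I| * k = n * k.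
  by rewrite -cardD addnC cardsC card_prod !card_ord.
by rewrite card_ffun_into card_ord cardD -mulnA -expnD cardDC.
Qed.

Lemma sink_state_maps_into (d : kmap n k) (i : 'I_n) :
  sink_state d i -> d \in maps_into [set i] [set i].
Proof.
move/forallP => di; rewrite inE; apply/forall_inP => -[x a].
by rewrite !inE andbT => /eqP /= ->; exact: di.
Qed.

(* A sink pair {i, j} forces the rows of i and j into {i, j} :|: S for some
   (k-1)-set S: enlarge N_ij :\: {i, j}, which has at most k-1 elements. *)
Lemma sink_pair_maps_into (d : kmap n k) (i j : 'I_n) :
  k.-1 <= n -> sink_pair d i j ->
  exists2 S : {set 'I_n}, #|S| = k.-1 & d \in maps_into [set i; j] ([set i; j] :|: S).
Proof.
move=> kn /andP[ij cardN].
set P := [set i; j]; set U := Nset d i j :\: P.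
have PN : P \subset Nset d i j by rewrite /Nset -setUA subsetUl.
have cardU : #|U| <= k.-1 by rewrite cardsD (setIidPr PN) cards2 ij; lia.
have [S US cardS] : exists2 S : {set 'I_n}, U \subset S & #|S| = k.-1.
  by apply: exists_superset_card; rewrite cardU card_ord.
exists S => //; rewrite inE; apply/forall_inP => -[x a].
rewrite in_setX /= => /andP[xP _].
have dN : d (x, a) \in Nset d i j.
  rewrite /Nset !inE; case/set2P: xP => ->.
    by rewrite (imset_f (fun b => d (i, b))) ?orbT.
  by rewrite (imset_f (fun b => d (j, b))) ?orbT.
rewrite in_setU; have [//|dP] := boolP (d (x, a) \in P).
by rewrite (subsetP US) // inE dP dN.
Qed.

Definition sink_state_maps : {set kmap n k} :=
  \bigcup_(i : 'I_n) maps_into [set i] [set i].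

Definition sink_pair_maps : {set kmap n k} :=
  \bigcup_(P : {set 'I_n} | #|P| == 2)
    \bigcup_(S : {set 'I_n} | #|S| == k.-1) maps_into P (P :|: S).

Lemma has_sink_cover :
  k.-1 <= n -> [set d | has_sink d] \subset sink_state_maps :|: sink_pair_maps.
Proof.
move=> kn; apply/subsetP => d; rewrite !inE => /orP[/existsP[i di] | /existsP[i /existsP[j dij]]].
  by apply/orP; left; apply/bigcupP; exists i => //; exact: sink_state_maps_into.
apply/orP; right; have [S cardS dS] := sink_pair_maps_into kn dij.
apply/bigcupP; exists [set i; j]; first by rewrite cards2; case/andP: dij => ->.
by apply/bigcupP; exists S; rewrite ?cardS.
Qed.

Lemma card_sink_state_family (i : 'I_n) :
  #|maps_into [set i] [set i]| * n ^ k = n ^ (n * k).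
Proof. by have := card_maps_into [set i] [set i]; rewrite cards1 !mul1n exp1n mul1n. Qed.

(* Size of one sink-pair family: at most (k+1)^(2k) n^(nk-2k), as
   |P :|: S| <= k+1. *)
Lemma card_sink_pair_family (P S : {set 'I_n}) :
  #|P| = 2 -> #|S| = k.-1 ->
  #|maps_into P (P :|: S)| * n ^ (2 * k) <= k.+1 ^ (2 * k) * n ^ (n * k).
Proof.
move=> cardP cardS; have := card_maps_into P (P :|: S); rewrite cardP => ->.
have cardPS : #|P :|: S| <= k.+1.
  by apply: leq_trans (leq_card_setU P S) _; rewrite cardP cardS add2n prednK.
by rewrite leq_mul2r; apply/orP; right; elim: (2 * k) => // e IHe; rewrite !expnS leq_mul.
Qed.

Lemma bad_count_union_bound :
  k.-1 <= n ->
  bad_count n k * n ^ (2 * k)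
    <= n * (n ^ k * n ^ (n * k))
       + 'C(n, 2) * ('C(n, k.-1) * (k.+1 ^ (2 * k) * n ^ (n * k))).
Proof.
move=> kn; rewrite /bad_count.
apply: leq_trans (leq_mul (subset_leq_card (has_sink_cover kn)) (leqnn _)) _.
apply: leq_trans (leq_mul (leq_card_setU _ _) (leqnn _)) _; rewrite mulnDl.
apply: leq_add.
  apply: leq_trans (leq_mul (card_bigcup_le _ _) (leqnn _)) _.
  rewrite big_distrl (eq_bigr (fun=> n ^ k * n ^ (n * k))) => [|i _].
    by rewrite sum_nat_const card_ord.
  by rewrite /= -(card_sink_state_family i) mulnCA -expnD addnn -mul2n.
apply: leq_trans (leq_mul (card_bigcup_le _ _) (leqnn _)) _.
rewrite big_distrl -[n in 'C(n, 2)]card_ord -sum_draws_const /=.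
apply: leq_sum => P /eqP cardP.
apply: leq_trans (leq_mul (card_bigcup_le _ _) (leqnn _)) _.
rewrite big_distrl -[n in 'C(n, _)]card_ord -sum_draws_const /=.
by apply: leq_sum => S /eqP cardS; exact: card_sink_pair_family.
Qed.
End Counting.

(* The union bound combined with C(n,2) 2! <= n^2 and C(n,k-1) (k-1)! <= n^(k-1),
   with the common factor n^(k+1) cancelled. *)
Lemma bad_count_scaled n k :
  0 < k <= n ->
  bad_count n k * n ^ k.-1 * (2 * (k.-1)`!)
    <= (2 * (k.-1)`! + k.+1 ^ (2 * k)) * n ^ (n * k).
Proof.
case/andP=> k_gt0 kn.
have n_gt0 : 0 < n by exact: leq_trans kn.
have union := bad_count_union_bound k_gt0 (leq_trans (leq_pred k) kn).
have pairs : 'C(n, 2) * 2 <= n * n by have := bin_fact_le n 2; rewrite -mulnn.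
have sets := bin_fact_le n k.-1.
have powk : n ^ k = n * n ^ k.-1 by rewrite -expnS prednK.
have pow2k : n ^ (2 * k) = n ^ k * n ^ k by rewrite mul2n -addnn expnD.
rewrite pow2k powk in union.
set b := n ^ k.-1 in union sets *; set f := (k.-1)`! in sets *.
set M := n ^ (n * k) in union *; set c := k.+1 ^ (2 * k) in union *.
set C2 := 'C(n, 2) in union pairs; set Ck := 'C(n, k.-1) in union sets.
set bad := bad_count n k in union *.
have b_gt0 : 0 < b by rewrite expn_gt0 n_gt0.
rewrite -(@leq_pmul2r (n * n * b)) ?muln_gt0 ?n_gt0 ?b_gt0 //.
have -> : bad * b * (2 * f) * (n * n * b) = bad * (n * b * (n * b)) * (2 * f) by ring.
apply: leq_trans (leq_mul union (leqnn _)) _.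
have -> : (n * (n * b * M) + C2 * (Ck * (c * M))) * (2 * f)
          = 2 * f * (n * n * b) * M + (C2 * 2) * (Ck * f) * (c * M) by ring.
have -> : (2 * f + c) * M * (n * n * b) = 2 * f * (n * n * b) * M + (n * n) * b * (c * M) by ring.
by rewrite leq_add2l leq_mul // leq_mul.
Qed.

Local Open Scope ring_scope.

Theorem mainTheorem3 (k : nat) (hk : (2 <= k)%N) :
  exists N : nat, forall n : nat, (N <= n)%N ->
    (bad_count n k)%:R / (n ^ (n * k))%:R
      <= (1 + ((k.+1) ^ (2 * k))%:R / (2 * (k.-1)`!)%:R) / (n ^ k.-1)%:R :> rat.
Proof.
exists k => n kn.
have k_gt0 : (0 < k)%N by exact: leq_trans hk.
have n_gt0 : (0 < n)%N by exact: leq_trans kn.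
have M_gt0 : (0 < n ^ (n * k))%N by rewrite expn_gt0 n_gt0.
have b_gt0 : (0 < n ^ k.-1)%N by rewrite expn_gt0 n_gt0.
have f_gt0 : (0 < 2 * (k.-1)`!)%N by rewrite muln_gt0 fact_gt0.
rewrite ler_pdivrMr ?ltr0n //.
have -> : (1 + ((k.+1) ^ (2 * k))%:R / (2 * (k.-1)`!)%:R) / (n ^ k.-1)%:R
            * (n ^ (n * k))%:R
          = ((2 * (k.-1)`! + (k.+1) ^ (2 * k)) * n ^ (n * k))%:R
            / (n ^ k.-1 * (2 * (k.-1)`!))%:R :> rat.
  by rewrite !natrM natrD; field; rewrite !pnatr_eq0 -!lt0n fact_gt0 b_gt0.
rewrite ler_pdivlMr; last by rewrite ltr0n muln_gt0 b_gt0.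
by rewrite -natrM ler_nat mulnA bad_count_scaled // k_gt0 kn.
Qed.
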